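(* Let $n\ge 7$ and let $CU_n$ be the set of chemical unicyclic graphs on $n$ vertices. Define the following subsets of $CU_n$ (in each, all $m_{i,j}$ not listed are $0$): $\alpha_1$: $n_2=n$ and $m_{2,2}=n$; $\alpha_2$: $n_4=0,n_3=1,n_2=n-2,n_1=1$, $m_{1,3}=1$, $m_{2,3}=2$, $m_{2,2}=n-3$; $\alpha_3$: $n_4=0,n_3=1,n_2=n-2,n_1=1$, $m_{1,2}=1$, $m_{2,3}=3$, $m_{2,2}=n-4$; $\alpha_9$: $n_4=0,n_3=2,n_2=n-4,n_1=2$, $m_{1,2}=2$, $m_{2,3}=4$, $m_{3,3}=1$, $m_{2,2}=n-7$. Let $G_1\in\alpha_1$, $G_2\in\alpha_3$, $G_3\in\alpha_2$, $G_4\in\alpha_9$, and let $G\in CU_n$ not belong to $\alpha_1\cup\alpha_2\cup\alpha_3\cup\alpha_9$. Then $SO_{red}(G_1)<SO_{red}(G_2)<SO_{red}(G_3)<SO_{red}(G_4)<SO_{red}(G)$.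
   Context: All graphs are simple and connected. A chemical graph is a graph with maximum degree at most $4$; a unicyclic graph is a connected graph with $n$ vertices and $n$ edges. $d_G(u)$ is the degree of $u$, $n_i$ the number of vertices of degree $i$, and $m_{i,j}$ the number of edges joining a vertex of degree $i$ to a vertex of degree $j$. The reduced Sombor index is $SO_{red}(G)=\sum_{uv\in E(G)}\sqrt{(d_G(u)-1)^2+(d_G(v)-1)^2}$. *)

From mathcomp Require Import all_boot all_order all_algebra.
Set Implicit Arguments. Unset Strict Implicit. Unset Printing Implicit Defensive.
Import Order.TTheory GRing.Theory Num.Theory.

Section Graphs.
Variable n : nat.
Implicit Types (e : rel 'I_n).

Definition simple_graph e := symmetric e /\ irreflexive e.

Definition connected_graph e := forall u v : 'I_n, connect e u v.

Definition deg e (v : 'I_n) : nat := #|[set u | e v u]|.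

Definition edge_set e : {set 'I_n * 'I_n} :=
  [set p | e p.1 p.2 && (p.1 < p.2)%N].

Definition num_edges e : nat := #|edge_set e|.

Definition chemical e := forall v, (deg e v <= 4)%N.

Definition unicyclic e := connected_graph e /\ num_edges e = n.

Definition CU e := [/\ simple_graph e, chemical e & unicyclic e].

Definition nv e (i : nat) : nat := #|[set v | deg e v == i]|.

Definition me e (i j : nat) : nat :=
  #|[set p in edge_set e |
      ((deg e p.1 == i) && (deg e p.2 == j)) ||
      ((deg e p.1 == j) && (deg e p.2 == i))]|.

Definition SO_red (R : rcfType) e : R :=
  \sum_(p in edge_set e)
     Num.sqrt ((((deg e p.1)%:R - 1) ^+ 2 + ((deg e p.2)%:R - 1) ^+ 2)%R).

(* "all m_{i,j} (1 <= i <= j <= 4) equal the listed values, unlisted ones are 0" *)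
Definition m_profile e (f : nat -> nat -> nat) :=
  forall i j, (1 <= i)%N -> (i <= j)%N -> (j <= 4)%N -> me e i j = f i j.

Definition alpha1 e :=
  nv e 2 = n /\
  m_profile e (fun i j => if (i, j) == (2, 2) then n else 0%N).

Definition alpha2 e :=
  [/\ nv e 4 = 0%N, nv e 3 = 1%N, nv e 2 = (n - 2)%N, nv e 1 = 1%N &
  m_profile e (fun i j =>
    if (i, j) == (1, 3) then 1%N
    else if (i, j) == (2, 3) then 2%N
    else if (i, j) == (2, 2) then (n - 3)%N else 0%N)].

Definition alpha3 e :=
  [/\ nv e 4 = 0%N, nv e 3 = 1%N, nv e 2 = (n - 2)%N, nv e 1 = 1%N &
  m_profile e (fun i j =>
    if (i, j) == (1, 2) then 1%N
    else if (i, j) == (2, 3) then 3%N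
    else if (i, j) == (2, 2) then (n - 4)%N else 0%N)].

Definition alpha9 e :=
  [/\ nv e 4 = 0%N, nv e 3 = 2%N, nv e 2 = (n - 4)%N, nv e 1 = 2%N &
  m_profile e (fun i j =>
    if (i, j) == (1, 2) then 2%N
    else if (i, j) == (2, 3) then 4%N
    else if (i, j) == (3, 3) then 1%N
    else if (i, j) == (2, 2) then (n - 7)%N else 0%N)].

End Graphs.

From mathcomp Require Import all_boot all_order all_algebra.
From mathcomp Require Import zify ring lra.
Import Order.TTheory GRing.Theory Num.Theory.

(* Each edge uv contributes s(d_u, d_v) = sqrt((d_u-1)^2 + (d_v-1)^2), and a unicyclic
   graph has n edges, so SO_red(G) = n sqrt 2 + sum_{i<=j} m_{i,j} (s(i,j) - sqrt 2).
   This excess is 0 on the cycle, and of the degree pairs that occur in a connected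
   graph with n > 2 only (1,2) has s(i,j) < sqrt 2.
   The handshake identities give n_1 = n_3 + 2 n_4: pendant vertices must be paid for
   by vertices of degree 3 or 4, whose edges have a large excess.  When n_4 = 0 and
   n_3 <= 2 the degree identities leave only the classes alpha_1, alpha_2, alpha_3,
   alpha_9 and a few heavier profiles; in all remaining cases linear arithmetic on the
   m_{i,j}, with the square roots known to two decimals, puts the excess above that
   of alpha_9. *)

Set Implicit Arguments.
Unset Strict Implicit.
Unset Printing Implicit Defensive.

Section GraphFacts.
Variables (n : nat) (e : rel 'I_n).

Lemma handshake (h : 'I_n -> nat) : simple_graph e ->
  \sum_v h v * deg e v = \sum_(p in edge_set e) (h p.1 + h p.2).
Proof.
case=> e_sym e_irr.
have deg_sum v : h v * deg e v = \sum_(u | e v u) h v.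
  by rewrite /deg -sum1_card big_distrr /= muln1; apply: eq_bigl => u; rewrite inE.
rewrite (eq_bigr _ (fun v _ => deg_sum v)) pair_big_dep /=.
rewrite (bigID (fun p : 'I_n * 'I_n => p.1 < p.2)%N) big_split /=; congr (_ + _).
  by apply: eq_bigl => p; rewrite inE.
rewrite (reindex_inj (h := fun p : 'I_n * 'I_n => (p.2, p.1))); last first.
  by case=> a b [c d] /= [-> ->].
apply: eq_bigl => -[a b] /=; rewrite inE /= e_sym.
case: (boolP (e a b)) => //= eab; rewrite -leqNgt leq_eqVlt.
by case: eqP => // /val_inj ab; move: eab; rewrite ab e_irr.
Qed.

Lemma deg_gt0 : connected_graph e -> (1 < n)%N -> forall v, (0 < deg e v)%N.
Proof.
move=> e_conn n_gt1 v.
have [u uv] : exists u : 'I_n, u != v.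
  have n_gt0 := ltnW n_gt1.
  case: (eqVneq v (Ordinal n_gt0)) => [->|v0]; first by exists (Ordinal n_gt1).
  by exists (Ordinal n_gt0); rewrite eq_sym.
case/connectP: (e_conn v u) => -[|w p] /=; first by move=> _ uE; rewrite uE eqxx in uv.
by case/andP => evw _ _; apply/card_gt0P; exists w; rewrite inE.
Qed.

Lemma deg1_nbr_uniq (v w x : 'I_n) : deg e v = 1%N -> e v w -> e v x -> x = w.
Proof.
move=> /eqP/cards1P[y nbrE] evw evx.
have : w \in [set u | e v u] by rewrite inE.
have : x \in [set u | e v u] by rewrite inE.
by rewrite nbrE !inE => /eqP -> /eqP ->.
Qed.

(* An edge between two pendant vertices is a whole connected component. *)
Lemma me11_eq0 : simple_graph e -> connected_graph e -> (2 < n)%N -> me e 1 1 = 0%N.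
Proof.
case=> e_sym _ e_conn n_gt2; apply/eqP; rewrite cards_eq0; apply/eqP/setP => -[a b].
rewrite !inE /= orbb; apply/negP => /andP[/andP[eab _] /andP[/eqP da /eqP db]].
have ab_out x y : e x y -> x \in [set a; b] -> y \in [set a; b].
  move=> /[swap] /set2P[->|->] exy; rewrite !inE.
    by rewrite (deg1_nbr_uniq da eab exy) eqxx orbT.
  have eba : e b a by rewrite e_sym.
  by rewrite (deg1_nbr_uniq db eba exy) eqxx.
have ab_closed : closed e (mem [set a; b]).
  by move=> x y exy; apply/idP/idP; apply: ab_out; rewrite // e_sym.
have : [set: 'I_n] \subset [set a; b].
  apply/subsetP => w _; rewrite -(closed_connect ab_closed (e_conn a w)).
  by rewrite set21.
by move/subset_leq_card; rewrite cardsT card_ord cards2; case: (a != b); lia.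
Qed.

Lemma me_diag_le_bin (i : nat) : (me e i i <= 'C(nv e i, 2))%N.
Proof.
set E := [set p in edge_set e | (deg e p.1 == i) && (deg e p.2 == i)].
have -> : me e i i = #|E| by apply: eq_card => p; rewrite !inE orbb.
have pair_inj : {in E &, injective (fun p : 'I_n * 'I_n => [set p.1; p.2])}.
  move=> [a b] [c d]; rewrite !inE /= => /andP[/andP[_ ab] _] /andP[/andP[_ cd] _] abcd.
  have /set2P[ac|ad] : a \in [set c; d] by rewrite -abcd set21.
    have /set2P[bc|bd] : b \in [set c; d] by rewrite -abcd set22.
      by move: ab; rewrite ac bc ltnn.
    by rewrite ac bd.
  have /set2P[ca|cb] : c \in [set a; b] by rewrite abcd set21.
    by move: cd; rewrite ca ad ltnn.
  by move: ab cd; rewrite ad cb => /ltn_trans dc /dc; rewrite ltnn.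
rewrite -(card_in_imset pair_inj) /nv -cards_draws; apply: subset_leq_card.
apply/subsetP => _ /imsetP[[a b] abE ->]; move: abE; rewrite !inE /=.
case/andP => /andP[_ ab] /andP[da db]; apply/andP; split.
  by apply/subsetP => x /set2P[->|->]; rewrite inE.
have ab_neq : a != b by apply: contraTneq ab => ->; rewrite ltnn.
by rewrite cards2 ab_neq.
Qed.

Lemma nvE k : nv e k = \sum_v (deg e v == k).
Proof. by rewrite /nv -sum1dep_card big_mkcond; apply: eq_bigr => v _; case: eqP. Qed.

End GraphFacts.

Local Open Scope ring_scope.

Definition chem_pairs : seq (nat * nat) :=
  [:: (1, 1); (1, 2); (1, 3); (1, 4); (2, 2); (2, 3); (2, 4); (3, 3); (3, 4); (4, 4)]%N.

Definition chem_sum (R : pzSemiRingType) (m : nat -> nat -> nat) (g : nat -> nat -> R) : R :=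
  \sum_(ij <- chem_pairs) (m ij.1 ij.2)%:R * g ij.1 ij.2.

Section DegreeProfile.
Variables (n : nat) (e : rel 'I_n).

Lemma sum_edge_chem_sum (R : pzSemiRingType) (g : nat -> nat -> R) :
  (forall i j, g i j = g j i) -> (forall v, 1 <= deg e v <= 4)%N ->
  \sum_(p in edge_set e) g (deg e p.1) (deg e p.2) = chem_sum (me e) g.
Proof.
move=> gC deg_range.
have me_sum i j : (me e i j)%:R * g i j = \sum_(p in edge_set e)
    if ((deg e p.1 == i) && (deg e p.2 == j)) || ((deg e p.1 == j) && (deg e p.2 == i))
    then g i j else 0.
  rewrite -big_mkcondr sumr_const mulr_natl; congr (_ *+ _).
  by rewrite /me; apply: eq_card => p; rewrite inE unfold_in.
rewrite /chem_sum [RHS](eq_bigr _ (fun ij _ => me_sum ij.1 ij.2)).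
rewrite exchange_big /=; apply: eq_bigr => p _.
move: (deg_range p.1) (deg_range p.2).
case: (deg e p.1) => [|[|[|[|[|a]]]]] //; case: (deg e p.2) => [|[|[|[|[|b]]]]] // _ _;
  by rewrite !big_cons big_nil /= ?addr0 ?add0r // gC.
Qed.

Lemma chem_sum_profile (R : pzSemiRingType) f (g : nat -> nat -> R) :
  m_profile e f -> chem_sum (me e) g = chem_sum f g.
Proof.
have chem_range : all (fun ij => [&& 1 <= ij.1, ij.1 <= ij.2 & ij.2 <= 4]%N) chem_pairs by [].
move=> ef; apply: eq_big_seq => ij /(allP chem_range)/and3P[? ? ?].
by rewrite ef.
Qed.

Lemma m_profile_intro f :
  me e 1 1 = f 1 1 -> me e 1 2 = f 1 2 -> me e 1 3 = f 1 3 -> me e 1 4 = f 1 4 ->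
  me e 2 2 = f 2 2 -> me e 2 3 = f 2 3 -> me e 2 4 = f 2 4 -> me e 3 3 = f 3 3 ->
  me e 3 4 = f 3 4 -> me e 4 4 = f 4 4 -> m_profile e f.
Proof. by move=> ? ? ? ? ? ? ? ? ? ? [|[|[|[|[|i]]]]] [|[|[|[|[|j]]]]]. Qed.

End DegreeProfile.

Section SomborWeights.
Variable R : rcfType.

Definition sombor (i j : nat) : R := Num.sqrt ((i%:R - 1) ^+ 2 + (j%:R - 1) ^+ 2).

Definition excess (m : nat -> nat -> nat) : R :=
  chem_sum m (fun i j => sombor i j - sombor 2 2).

Lemma somborC i j : sombor i j = sombor j i.
Proof. by rewrite /sombor addrC. Qed.

Lemma sombor1S (j : nat) : sombor 1 j.+1 = j%:R.
Proof. by rewrite /sombor subrr expr0n add0r mulrSr addrK sqrtr_sqr ger0_norm. Qed.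

Lemma sqrtr_between (lo hi x : R) :
  0 <= lo -> 0 <= hi -> lo ^+ 2 <= x -> x <= hi ^+ 2 -> lo <= Num.sqrt x /\ Num.sqrt x <= hi.
Proof.
move=> lo_ge0 hi_ge0 lo_x x_hi; have x_ge0 := le_trans (sqr_ge0 lo) lo_x.
by rewrite -(ger0_norm lo_ge0) -(ger0_norm hi_ge0) -!sqrtr_sqr !ler_sqrt ?sqr_ge0.
Qed.

Lemma sombor22_bounds : 141/100 <= sombor 2 2 /\ sombor 2 2 <= 142/100.
Proof. by apply: sqrtr_between; lra. Qed.

Lemma sombor23_bounds : 223/100 <= sombor 2 3 /\ sombor 2 3 <= 224/100.
Proof. by apply: sqrtr_between; lra. Qed.

Lemma sombor24_bounds : 316/100 <= sombor 2 4 /\ sombor 2 4 <= 317/100.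
Proof. by apply: sqrtr_between; lra. Qed.

Lemma sombor33_bounds : 282/100 <= sombor 3 3 /\ sombor 3 3 <= 283/100.
Proof. by apply: sqrtr_between; lra. Qed.

Lemma sombor34_bounds : 360/100 <= sombor 3 4 /\ sombor 3 4 <= 361/100.
Proof. by apply: sqrtr_between; lra. Qed.

Lemma sombor44_bounds : 424/100 <= sombor 4 4 /\ sombor 4 4 <= 425/100.
Proof. by apply: sqrtr_between; lra. Qed.

(* The weights are 100 times lower bounds of s(i,j) - sqrt 2, and 392 bounds 100 times
   the excess of alpha_9 from above. *)
Lemma excess_gt_alpha9 (m : nat -> nat -> nat) : m 1 1 = 0%N ->
  (42 * m 1 2 + 392 < 58 * m 1 3 + 158 * m 1 4 + 81 * m 2 3 + 174 * m 2 4
     + 140 * m 3 3 + 218 * m 3 4 + 282 * m 4 4)%N ->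
  2 * (sombor 1 2 - sombor 2 2) + 4 * (sombor 2 3 - sombor 2 2) + (sombor 3 3 - sombor 2 2)
    < excess m.
Proof.
move=> m11; rewrite -(ltr_nat R).
have lb i j (lo : R) : lo <= sombor i j - sombor 2 2 ->
    (m i j)%:R * lo <= (m i j)%:R * (sombor i j - sombor 2 2).
  by move=> ?; rewrite ler_wpM2l.
have [? ?] := sombor22_bounds; have [? ?] := sombor23_bounds; have [? ?] := sombor24_bounds.
have [? ?] := sombor33_bounds; have [? ?] := sombor34_bounds; have [? ?] := sombor44_bounds.
move: (lb 1 2 (-42/100)) (lb 1 3 (58/100)) (lb 1 4 (158/100)) (lb 2 3 (81/100))
  (lb 2 4 (174/100)) (lb 3 3 (140/100)) (lb 3 4 (218/100)) (lb 4 4 (282/100)).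
rewrite /excess /chem_sum !big_cons big_nil /= m11 !sombor1S.
lra.
Qed.

End SomborWeights.

Section ChemicalUnicyclic.
Variables (n : nat) (e : rel 'I_n).
Hypotheses (eCU : CU e) (n_gt2 : (2 < n)%N).

Lemma chem_deg_range v : (1 <= deg e v <= 4)%N.
Proof.
case: eCU => _ e_chem [e_conn _]; rewrite e_chem andbT.
by apply: deg_gt0 => //; apply: ltnW.
Qed.

Lemma nv_partition : (nv e 1 + nv e 2 + nv e 3 + nv e 4)%N = n.
Proof.
transitivity (\sum_(v : 'I_n) 1)%N; last by rewrite sum1_card card_ord.
rewrite !nvE -!big_split; apply: eq_bigr => v _ /=.
by move: (chem_deg_range v); case: (deg e v) => [|[|[|[|[|d]]]]].
Qed.

Lemma sum_edge_CU (R : pzSemiRingType) (g : nat -> nat -> R) :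
  (forall i j, g i j = g j i) ->
  \sum_(p in edge_set e) g (deg e p.1) (deg e p.2) = chem_sum (me e) g.
Proof. by move=> gC; apply: sum_edge_chem_sum gC chem_deg_range. Qed.

Lemma chem_me11_eq0 : me e 1 1 = 0%N.
Proof. by have [e_simple _ [e_conn _]] := eCU; apply: me11_eq0. Qed.

Lemma mul_nv k : (k * nv e k)%N = chem_sum (me e) (fun i j => (i == k) + (j == k))%N.
Proof.
have [e_simple _ _] := eCU.
rewrite -sum_edge_CU => [|i j]; last exact: addnC.
rewrite -(handshake (fun v => (deg e v == k) : nat)) // nvE big_distrr /=.
by apply: eq_bigr => v _; case: eqP => [->|_]; rewrite ?muln0 ?mul0n // mulnC.
Qed.

Lemma chem_edge_count : (me e 1 2 + me e 1 3 + me e 1 4 + me e 2 2 + me e 2 3 + me e 2 4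
  + me e 3 3 + me e 3 4 + me e 4 4)%N = n.
Proof.
have [_ _ [_ edges_n]] := eCU.
rewrite -[RHS]edges_n /num_edges -sum1_card.
have := @sum_edge_CU nat (fun _ _ => 1%N) (fun _ _ => erefl).
rewrite /chem_sum !big_cons big_nil /= !natn chem_me11_eq0 => ->.
lia.
Qed.

Lemma chem_degree_equations :
  [/\ nv e 1 = me e 1 2 + me e 1 3 + me e 1 4,
      2 * nv e 2 = me e 1 2 + 2 * me e 2 2 + me e 2 3 + me e 2 4,
      3 * nv e 3 = me e 1 3 + me e 2 3 + 2 * me e 3 3 + me e 3 4 &
      4 * nv e 4 = me e 1 4 + me e 2 4 + me e 3 4 + 2 * me e 4 4]%N.
Proof.
move: (mul_nv 1) (mul_nv 2) (mul_nv 3) (mul_nv 4).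
rewrite /chem_sum !big_cons !big_nil /= !natn chem_me11_eq0.
by split; lia.
Qed.

Lemma SO_red_excess (R : rcfType) : SO_red R e = n%:R * sombor R 2 2 + excess R (me e).
Proof.
have [_ _ [_ edges_n]] := eCU.
rewrite /excess -sum_edge_CU => [|i j]; last by rewrite somborC.
by rewrite sumrB sumr_const -/(num_edges e) edges_n mulr_natl addrC subrK.
Qed.

Lemma chem_degree_cases : ~ alpha1 e -> ~ alpha2 e -> ~ alpha3 e -> ~ alpha9 e ->
  [\/ (0 < nv e 4)%N, (2 < nv e 3)%N |
      [/\ nv e 4 = 0%N, nv e 3 = 2%N, (me e 3 3 <= 1)%N & me e 3 3 = 0%N \/ (me e 1 2 <= 1)%N]].
Proof.
move=> not1 not2 not3 not9.
have m11 := chem_me11_eq0; have [d1 d2 d3 d4] := chem_degree_equations.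
have parts := nv_partition; have edges := chem_edge_count.
have m33 := me_diag_le_bin e 3; rewrite bin2 in m33.
case: (posnP (nv e 4)) => [n4|]; last by constructor 1.
case: (ltnP 2 (nv e 3)) => [|n3_le2]; first by constructor 2.
have [n3|[n3|n3]] : nv e 3 = 0%N \/ nv e 3 = 1%N \/ nv e 3 = 2%N by lia.
- by case: not1; split; [lia | apply: m_profile_intro => /=; lia].
- have [m13|m13] : me e 1 3 = 0%N \/ me e 1 3 = 1%N by lia.
    by case: not3; split; [lia.. | apply: m_profile_intro => /=; lia].
  by case: not2; split; [lia.. | apply: m_profile_intro => /=; lia].
- constructor 3; split; [by [] | by [] | lia |].
  have [m9|//] : me e 3 3 = 1%N /\ me e 1 2 = 2%N \/ me e 3 3 = 0%N \/ (me e 1 2 <= 1)%N by lia.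
  by case: not9; split; [lia.. | apply: m_profile_intro => /=; lia].
Qed.

Lemma chem_weight_gt : ~ alpha1 e -> ~ alpha2 e -> ~ alpha3 e -> ~ alpha9 e ->
  (42 * me e 1 2 + 392 < 58 * me e 1 3 + 158 * me e 1 4 + 81 * me e 2 3 + 174 * me e 2 4
     + 140 * me e 3 3 + 218 * me e 3 4 + 282 * me e 4 4)%N.
Proof.
move=> not1 not2 not3 not9.
have m11 := chem_me11_eq0; have [d1 d2 d3 d4] := chem_degree_equations.
have parts := nv_partition; have edges := chem_edge_count.
by case: (chem_degree_cases not1 not2 not3 not9) => [||[]]; lia.
Qed.

End ChemicalUnicyclic.

Section ExtremalClasses.
Variables (R : rcfType) (n : nat).
Implicit Types e : rel 'I_n.

Lemma excess_alpha1 e : alpha1 e -> excess R (me e) = 0.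
Proof.
case=> _ ef; rewrite /excess (chem_sum_profile _ ef) /chem_sum !big_cons big_nil /=.
ring.
Qed.

Lemma excess_alpha3 e : alpha3 e ->
  excess R (me e) = sombor R 1 2 - sombor R 2 2 + 3 * (sombor R 2 3 - sombor R 2 2).
Proof.
case=> _ _ _ _ ef; rewrite /excess (chem_sum_profile _ ef) /chem_sum !big_cons big_nil /=.
ring.
Qed.

Lemma excess_alpha2 e : alpha2 e ->
  excess R (me e) = sombor R 1 3 - sombor R 2 2 + 2 * (sombor R 2 3 - sombor R 2 2).
Proof.
case=> _ _ _ _ ef; rewrite /excess (chem_sum_profile _ ef) /chem_sum !big_cons big_nil /=.
ring.
Qed.

Lemma excess_alpha9 e : alpha9 e ->
  excess R (me e) = 2 * (sombor R 1 2 - sombor R 2 2) + 4 * (sombor R 2 3 - sombor R 2 2)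
                    + (sombor R 3 3 - sombor R 2 2).
Proof.
case=> _ _ _ _ ef; rewrite /excess (chem_sum_profile _ ef) /chem_sum !big_cons big_nil /=.
ring.
Qed.

Lemma excess_alpha1_lt_alpha3 e1 e3 : alpha1 e1 -> alpha3 e3 ->
  excess R (me e1) < excess R (me e3).
Proof.
move=> /excess_alpha1 -> /excess_alpha3 ->; rewrite sombor1S.
have [? ?] := sombor22_bounds R; have [? ?] := sombor23_bounds R.
lra.
Qed.

Lemma excess_alpha3_lt_alpha2 e3 e2 : alpha3 e3 -> alpha2 e2 ->
  excess R (me e3) < excess R (me e2).
Proof.
move=> /excess_alpha3 -> /excess_alpha2 ->; rewrite !sombor1S.
have [? ?] := sombor22_bounds R; have [? ?] := sombor23_bounds R.
lra.
Qed.

Lemma excess_alpha2_lt_alpha9 e2 e9 : alpha2 e2 -> alpha9 e9 ->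
  excess R (me e2) < excess R (me e9).
Proof.
move=> /excess_alpha2 -> /excess_alpha9 ->; rewrite !sombor1S.
have [? ?] := sombor22_bounds R; have [? ?] := sombor23_bounds R.
have [? ?] := sombor33_bounds R.
lra.
Qed.

Lemma excess_alpha9_lt_other e9 e : alpha9 e9 -> CU e -> (2 < n)%N ->
  ~ alpha1 e -> ~ alpha2 e -> ~ alpha3 e -> ~ alpha9 e ->
  excess R (me e9) < excess R (me e).
Proof.
move=> /excess_alpha9 -> eCU n_gt2 not1 not2 not3 not9.
apply: excess_gt_alpha9; first exact: chem_me11_eq0.
exact: chem_weight_gt.
Qed.

End ExtremalClasses.

Theorem theorem3p7 (R : rcfType) (n : nat) (Hn : (7 <= n)%N)
  (G1 G2 G3 G4 G : rel 'I_n) :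
  CU G1 -> alpha1 G1 ->
  CU G2 -> alpha3 G2 ->
  CU G3 -> alpha2 G3 ->
  CU G4 -> alpha9 G4 ->
  CU G -> ~ alpha1 G -> ~ alpha2 G -> ~ alpha3 G -> ~ alpha9 G ->
  SO_red R G1 < SO_red R G2 /\ SO_red R G2 < SO_red R G3 /\
  SO_red R G3 < SO_red R G4 /\ SO_red R G4 < SO_red R G.
Proof.
move=> C1 A1 C2 A3 C3 A2 C4 A9 C not1 not2 not3 not9.
have n_gt2 : (2 < n)%N by apply: leq_trans Hn.
rewrite (SO_red_excess C1 n_gt2) (SO_red_excess C2 n_gt2) (SO_red_excess C3 n_gt2).
rewrite (SO_red_excess C4 n_gt2) (SO_red_excess C n_gt2) !ltrD2l.
split; first exact: excess_alpha1_lt_alpha3 A1 A3.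
split; first exact: excess_alpha3_lt_alpha2 A3 A2.
split; first exact: excess_alpha2_lt_alpha9 A2 A9.
exact: excess_alpha9_lt_other A9 C n_gt2 not1 not2 not3 not9.
Qed.
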